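(* Let $n,m\ge 2$ be integers and $P_n,P_m$ paths on $n$ and $m$ vertices. Then $AT(P_n+_R P_m)=3$.
   Context: For an orientation $D$, a subdigraph is Eulerian if every vertex has equal in- and outdegree in it; $D$ is an AT-orientation if the numbers of Eulerian subgraphs with an even and with an odd number of arcs differ; $AT(G)$ is the smallest $k$ such that $G$ has an AT-orientation of maximum outdegree at most $k-1$. $R(G)$ has vertex set $V(G)\cup E(G)$ and consists of $G$ together with, for each edge $e=xy$, a new vertex $e$ adjacent to $x$ and $y$. $G+_R H$ has vertex set $(V(G)\cup E(G))\times V(H)$, with $(u_1,u_2)\sim(v_1,v_2)$ iff [$u_1=v_1\in V(G)$ and $u_2v_2\in E(H)$] or [$u_2=v_2$ and $u_1v_1\in E(R(G))$]. *)

From mathcomp Require Import all_boot.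
Set Implicit Arguments. Unset Strict Implicit. Unset Printing Implicit Defensive.

(* A (simple) graph is a finite vertex type V with a symmetric irreflexive
   adjacency relation adj : rel V. *)

(* D : rel V (D x y = "arc x -> y") is an orientation of adj. *)
Definition is_orientation (V : finType) (adj D : rel V) : Prop :=
  (forall x y, D x y -> adj x y) /\ (forall x y, adj x y -> D x y (+) D y x).

Definition outdeg (V : finType) (D : rel V) (v : V) : nat := #|[set y | D v y]|.

Definition eulerian_sub (V : finType) (D : rel V) (A : {set V * V}) : bool :=
  [forall a in A, D a.1 a.2] &&
  [forall v, #|[set a in A | a.1 == v]| == #|[set a in A | a.2 == v]|].

Definition even_eulerian (V : finType) (D : rel V) : {set {set V * V}} :=
  [set A | eulerian_sub D A & ~~ odd #|A|].
Definition odd_eulerian (V : finType) (D : rel V) : {set {set V * V}} :=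
  [set A | eulerian_sub D A & odd #|A|].

Definition AT_orientation (V : finType) (D : rel V) : Prop :=
  #|even_eulerian D| <> #|odd_eulerian D|.

Definition has_AT_orientation (V : finType) (adj : rel V) (k : nat) : Prop :=
  exists D : rel V, is_orientation adj D /\ AT_orientation D /\
    forall v, outdeg D v < k.

Definition AT_eq (V : finType) (adj : rel V) (k : nat) : Prop :=
  has_AT_orientation adj k /\ forall j, j < k -> ~ has_AT_orientation adj j.

Definition is_edge (V : finType) (adj : rel V) (e : {set V}) : bool :=
  [exists x, exists y, adj x y && (e == [set x; y])].

Definition edge_type (V : finType) (adj : rel V) : finType :=
  {e : {set V} | is_edge adj e}.

Definition R_vert (V : finType) (adj : rel V) : finType :=
  (V + edge_type adj)%type.

Definition R_adj (V : finType) (adj : rel V) : rel (R_vert adj) :=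
  fun u v =>
    match u, v with
    | inl x, inl y => adj x y
    | inl x, inr e => x \in val e
    | inr e, inl x => x \in val e
    | inr _, inr _ => false
    end.

Definition Rsum_vert (V W : finType) (adjG : rel V) : finType :=
  (R_vert adjG * W)%type.

Definition Rsum_adj (V W : finType) (adjG : rel V) (adjH : rel W)
  : rel (Rsum_vert W adjG) :=
  fun u v =>
    (match u.1, v.1 with
     | inl x, inl y => (x == y) && adjH u.2 v.2
     | _, _ => false
     end)
    || ((u.2 == v.2) && R_adj u.1 v.1).

Definition path_adj (n : nat) : rel 'I_n :=
  fun i j => (i.+1 == j :> nat) || (j.+1 == i :> nat).

From mathcomp Require Import all_boot zify.

Set Implicit Arguments.
Unset Strict Implicit.
Unset Printing Implicit Defensive.

(* Upper bound: order the vertices by the rank x + j for a path vertex (x, j)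
   and put every subdivision vertex (e, j) above all of them; orienting each
   edge downwards gives an acyclic orientation (whose only Eulerian subgraph
   is empty, so it is an AT-orientation) in which (x, j) points only to
   (x-1, j) and (x, j-1), and (e, j) only to the two ends of e.
   Lower bound: the triangle (0,0), (1,0), ({0,1},0) shares the edge
   (0,0)(1,0) with the 4-cycle (0,0), (1,0), (1,1), (0,1).  With outdegree at
   most one, the three triangle edges use up the out-arcs of its three
   vertices, so (0,1) and (1,1) both point into the triangle and the edge
   between them cannot be oriented. *)

Section Orientations.
Variables (T : finType) (adj D : rel T).

Lemma orientation_arc x y : is_orientation adj D -> adj x y -> D x y || D y x.
Proof. by case=> _ hD /hD; case: (D x y); case: (D y x). Qed.

Lemma outdeg_le1_arc_uniq v y1 y2 :
  outdeg D v <= 1 -> D v y1 -> D v y2 -> y1 = y2.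
Proof.
move=> hv h1 h2; apply/eqP; apply: contraTT hv => ne.
have : #|[set y1; y2]| <= outdeg D v.
  by apply: subset_leq_card; apply/subsetP => y; rewrite !inE => /orP [] /eqP ->.
by rewrite cards2 ne -ltnNge.
Qed.

Lemma outdeg_le2_inj v (f : T -> bool) :
  {in [set y | D v y] &, injective f} -> outdeg D v <= 2.
Proof. by move/leq_card_in; rewrite card_bool. Qed.

Hypothesis outdeg_le1 : forall v, outdeg D v <= 1.

Lemma no_other_arc {v p y} : D v p -> y != p -> ~~ D v y.
Proof.
move=> hp yp; apply/negP => /(outdeg_le1_arc_uniq (outdeg_le1 v) hp) py.
by move: yp; rewrite py eqxx.
Qed.

Lemma no_other_arc2 {v p q y} : D v p || D v q -> y != p -> y != q -> ~~ D v y.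
Proof. by case/orP=> /no_other_arc hv yp yq; [apply: hv yp | apply: hv yq]. Qed.

Lemma triangle_out_arc a b c : b != a -> c != a ->
  D a b || D b a -> D a c || D c a -> D b c || D c b -> D a b || D a c.
Proof.
move=> ba ca; case: (D a b) (D a c) => [|] [|] //= hba hca.
by rewrite (negbTE (no_other_arc hba ca)) (negbTE (no_other_arc hca ba)).
Qed.

Lemma triangle_square_unorientable a b c d f :
  uniq [:: a; b; c; d; f] ->
  D a b || D b a -> D a c || D c a -> D b c || D c b ->
  D a d || D d a -> D b f || D f b -> D d f || D f d -> False.
Proof.
rewrite /= !inE !negb_or -!andbA.
move=> /and5P [ab ac ad af /and5P [bc bd bf cd /and3P [cf _ _]]].
move=> hab hac hbc had hbf hdf.
have ha : D a b || D a c by apply: triangle_out_arc; rewrite // eq_sym.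
have hb : D b a || D b c.
  by apply: triangle_out_arc; rewrite // 1?orbC // eq_sym.
have hda : D d a.
  by move: had; rewrite (negbTE (no_other_arc2 ha _ _)) // eq_sym.
have hfb : D f b.
  by move: hbf; rewrite (negbTE (no_other_arc2 hb _ _)) // eq_sym.
by case/orP: hdf; apply/negP; [apply: no_other_arc hda _ | apply: no_other_arc hfb _];
  rewrite eq_sym.
Qed.
End Orientations.

Lemma eulerian_sub0 (T : finType) (D : rel T) : eulerian_sub D set0.
Proof.
apply/andP; split; apply/forallP => x; first by rewrite inE.
by rewrite !setIdE !set0I.
Qed.

Section Ranked.
Variables (T : finType) (D : rel T) (r : T -> nat).
Hypothesis D_rank : forall x y, D x y -> r y < r x.

Lemma eulerian_sub_ranked A : eulerian_sub D A -> A = set0.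
Proof.
case/andP=> /forall_inP A_arcs /forallP A_bal.
apply/eqP/negPn/negP => /set0Pn [a0 Aa0].
have [a Aa a_min] := arg_minnP (fun a : T * T => r a.2) Aa0.
have : 0 < #|[set b in A | b.2 == a.2]|.
  by apply/card_gt0P; exists a; rewrite inE eqxx andbT.
rewrite -(eqP (A_bal a.2)) => /card_gt0P [b]; rewrite inE => /andP [Ab /eqP ba].
have := D_rank (A_arcs _ Ab); rewrite ba => lt_ba.
by have := a_min _ Ab; rewrite leqNgt lt_ba.
Qed.

Lemma AT_orientation_ranked : AT_orientation D.
Proof.
rewrite /AT_orientation.
have -> : odd_eulerian D = set0.
  apply/setP => A; rewrite !inE; apply/negbTE/negP.
  by case/andP=> /eulerian_sub_ranked ->; rewrite cards0.
rewrite cards0; apply/eqP; rewrite -lt0n; apply/card_gt0P.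
by exists set0; rewrite !inE eulerian_sub0 cards0.
Qed.
End Ranked.

Section RankOrientation.
Variables (T : finType) (adj : rel T) (r : T -> nat).

Definition rank_orient : rel T := fun x y => adj x y && (r y < r x).

Lemma rank_orient_lt x y : rank_orient x y -> r y < r x.
Proof. by case/andP. Qed.

Lemma rank_orientP :
  symmetric adj -> (forall x y, adj x y -> r x != r y) ->
  is_orientation adj rank_orient.
Proof.
move=> adjC adj_rank; split=> [x y /andP [] // | x y xy].
rewrite /rank_orient [adj y x]adjC xy /=.
by have := adj_rank x y xy; case: ltngtP.
Qed.
End RankOrientation.

Lemma R_adj_sym (V : finType) (adj : rel V) : symmetric adj -> symmetric (@R_adj V adj).
Proof. by move=> adjC [x|e] [y|f] //=; apply: adjC. Qed.

Lemma Rsum_adj_sym (V W : finType) (adjG : rel V) (adjH : rel W) :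
  symmetric adjG -> symmetric adjH -> symmetric (@Rsum_adj V W adjG adjH).
Proof.
move=> adjGC adjHC [u1 u2] [v1 v2]; rewrite /Rsum_adj /= eq_sym (R_adj_sym adjGC).
by case: u1 v1 => [x|e] [y|f] //; rewrite eq_sym adjHC.
Qed.

Lemma path_adj_sym n : symmetric (@path_adj n).
Proof. by move=> i j; rewrite /path_adj orbC. Qed.

Section PathRsum.
Variables n m : nat.
Local Notation V := (Rsum_vert 'I_m (@path_adj n)).
Local Notation adj := (@Rsum_adj 'I_n 'I_m (@path_adj n) (@path_adj m)).

Definition grid_rank (u : V) : nat := if u.1 is inl x then x + u.2 else n + m.

Local Notation D := (@rank_orient V adj grid_rank).

Lemma grid_rank_adj u v : adj u v -> grid_rank u != grid_rank v.
Proof.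
case: u v => [[x|e] j] [[y|f] k]; rewrite /Rsum_adj /R_adj /path_adj /grid_rank /=.
- by case/orP=> /andP [/eqP <- /orP [] /eqP <-]; lia.
- by move=> _; have := ltn_ord x; have := ltn_ord j; lia.
- by move=> _; have := ltn_ord y; have := ltn_ord k; lia.
- by rewrite andbF.
Qed.

Lemma grid_orientation : is_orientation adj D.
Proof.
apply: rank_orientP; last exact: grid_rank_adj.
exact: Rsum_adj_sym (@path_adj_sym n) (@path_adj_sym m).
Qed.

Lemma grid_orient_inl i j y : D (inl i, j) y ->
  exists x k, y = (inl x, k) /\
    (x = i :> nat /\ k.+1 = j :> nat \/ k = j :> nat /\ x.+1 = i :> nat).
Proof.
case: y => [[x|e] k]; rewrite /rank_orient /Rsum_adj /R_adj /path_adj /grid_rank /=.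
- move=> /andP [/orP [] /andP [/eqP ix /orP [] /eqP adj_ik] lt]; exists x, k;
    split=> //; subst; lia.
- by case/andP=> _; have := ltn_ord i; have := ltn_ord j; lia.
Qed.

Lemma outdeg_grid_inl i j : outdeg D (inl i, j) <= 2.
Proof.
apply: (@outdeg_le2_inj _ D _ (fun y : V => y.2 == j)) => y1 y2; rewrite !inE.
move=> /grid_orient_inl [x1 [k1 [-> h1]]] /grid_orient_inl [x2 [k2 [-> h2]]].
rewrite /= -!val_eqE /= => e12.
have [x12 k12] : x1 = x2 :> nat /\ k1 = k2 :> nat.
  by move: e12; do 2 case: eqP => /=; lia.
by congr (inl _, _); apply: val_inj.
Qed.

Lemma grid_orient_inr e j y : D (inr e, j) y -> exists2 x, y = (inl x, j) & x \in val e.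
Proof.
case: y => [[x|f] k]; rewrite /rank_orient /Rsum_adj /R_adj /= ?andbF //.
by case/andP=> /andP [/eqP <- ex] _; exists x.
Qed.

Lemma outdeg_grid_inr e j : outdeg D (inr e, j) <= 2.
Proof.
have [a [b e_ab]] : exists a b, val e = [set a; b].
  by case/existsP: (valP e) => a /existsP [b /andP [_ /eqP ->]]; exists a, b.
apply: (@outdeg_le2_inj _ D _ (fun y : V => y.1 == inl a)) => y1 y2; rewrite !inE.
move=> /grid_orient_inr [x1 -> ex1] /grid_orient_inr [x2 -> ex2] /=.
move: ex1 ex2; rewrite e_ab !inE.
by do 2 case/orP=> /eqP->; rewrite ?eqxx //; case: eqP => // -[->].
Qed.

Lemma outdeg_grid v : outdeg D v <= 2.
Proof. by case: v => [[i|e] j]; [apply: outdeg_grid_inl | apply: outdeg_grid_inr]. Qed.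

Lemma grid_has_AT_orientation3 : has_AT_orientation adj 3.
Proof.
exists D; split; first exact: grid_orientation.
split; last exact: outdeg_grid.
exact: AT_orientation_ranked (@rank_orient_lt _ _ _).
Qed.

Lemma grid_outdeg_le1_unorientable (D' : rel V) :
  1 < n -> 1 < m -> is_orientation adj D' -> (forall v, outdeg D' v <= 1) -> False.
Proof.
move=> n_gt1 m_gt1 D'_orient D'_out.
pose i0 := Ordinal (ltnW n_gt1); pose i1 := Ordinal n_gt1.
pose j0 := Ordinal (ltnW m_gt1); pose j1 := Ordinal m_gt1.
have e01 : is_edge (@path_adj n) [set i0; i1].
  by apply/existsP; exists i0; apply/existsP; exists i1; rewrite eqxx.
apply: (@triangle_square_unorientable _ D' D'_out (inl i0, j0) (inl i1, j0)
  (inr (exist (is_edge _) _ e01), j0) (inl i0, j1) (inl i1, j1)) => //;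
  apply: (orientation_arc D'_orient); rewrite /Rsum_adj /= ?inE ?eqxx ?orbT //.
Qed.
End PathRsum.

Theorem corollary3p7 (n m : nat) :
  2 <= n -> 2 <= m ->
  AT_eq (@Rsum_adj 'I_n 'I_m (@path_adj n) (@path_adj m)) 3.
Proof.
move=> n_gt1 m_gt1; split; first exact: grid_has_AT_orientation3.
move=> k k_lt3 [D [D_orient [_ D_out]]].
apply: (grid_outdeg_le1_unorientable n_gt1 m_gt1 D_orient) => v.
by rewrite -ltnS; apply: leq_trans (D_out v) _.
Qed.
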